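(* If $\mathbf{A}\in\mathbb{R}^{n_1\times r}$ and $\mathbf{B}\in\mathbb{R}^{n_2\times r}$, then $\mu(\mathbf{A}\odot\mathbf{B})\le\mu(\mathbf{A})\mu(\mathbf{B})r$.
   Context: For an $n\times r$ matrix $\mathbf{M}$, its coherence is $\mu(\mathbf{M})=\frac{n}{r}\max_{i\in[n]}\|\mathrm{proj}_{\mathrm{col}(\mathbf{M})}\mathbf{e}_i\|_2^2$, where $r$ is the number of columns, $\mathrm{col}(\mathbf{M})$ the column space and $\mathbf{e}_i$ the $i$-th standard basis vector. The Khatri–Rao product $\mathbf{A}\odot\mathbf{B}\in\mathbb{R}^{n_1n_2\times r}$ is the matrix whose $\ell$-th column is the Kronecker product $\mathbf{A}_{:,\ell}\otimes\mathbf{B}_{:,\ell}$. *)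

From HB Require Import structures.
From mathcomp Require Import all_boot all_order all_algebra.
From mathcomp Require Import reals.
From Stdlib Require Import ClassicalEpsilon.
Set Implicit Arguments. Unset Strict Implicit. Unset Printing Implicit Defensive.
Import Order.TTheory GRing.Theory Num.Theory.
Local Open Scope ring_scope.

Section Defs.
Variable R : realType.

Definition is_proj_col (n r : nat) (M : 'M[R]_(n, r)) (v p : 'cV[R]_n) : Prop :=
  (p^T <= M^T)%MS /\ M^T *m (v - p) = 0.

(* proj_{col(M)} v (exists and is unique; chosen by choice) *)
Definition proj_col (n r : nat) (M : 'M[R]_(n, r)) (v : 'cV[R]_n) : 'cV[R]_n :=
  epsilon (inhabits 0) (is_proj_col M v).

Definition sqnorm (n : nat) (v : 'cV[R]_n) : R := \sum_(i < n) v i 0 ^+ 2.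

Definition e_vec (n : nat) (i : 'I_n) : 'cV[R]_n := delta_mx i 0.

Definition coherence (n r : nat) (M : 'M[R]_(n, r)) : R :=
  n%:R / r%:R * \big[Num.max/0]_(i < n) sqnorm (proj_col M (e_vec i)).

(* Khatri-Rao product: column l is A_{:,l} (Kronecker) B_{:,l}; the row index
   (i, j) is encoded row-major as mxvec_index i j, i.e. value i * n2 + j. *)
Definition khatri_rao (n1 n2 r : nat) (A : 'M[R]_(n1, r)) (B : 'M[R]_(n2, r))
  : 'M[R]_(n1 * n2, r) :=
  \matrix_(k, l)
    (let ij := enum_val (cast_ord (esym (mxvec_cast n1 n2)) k) in
     A ij.1 l * B ij.2 l).
End Defs.

From HB Require Import structures.
From mathcomp Require Import all_boot all_order all_algebra.
From mathcomp Require Import reals.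
From Stdlib Require Import ClassicalEpsilon.
From mathcomp Require Import ring.
Set Implicit Arguments. Unset Strict Implicit. Unset Printing Implicit Defensive.
Import Order.TTheory GRing.Theory Num.Theory.
Local Open Scope ring_scope.

(* The columns of A ⊙ B are the tensors a_l ⊗ b_l, and the index (i, j) has
   e_(i,j) = e_i ⊗ e_j.  With p = proj_A e_i and q = proj_B e_j, the tensor
   p ⊗ q has the same inner products with every a_l ⊗ b_l as e_i ⊗ e_j,
   since <a_l ⊗ b_l, p ⊗ q> = <a_l, p><b_l, q>.  The projection of e_(i,j) is
   the shortest such vector, so ||proj e_(i,j)||^2 <= ||p||^2 ||q||^2.  Taking
   maxima and multiplying by (n1 n2)/r gives mu(A ⊙ B) <= mu(A) mu(B) r. *)

Lemma rV_self_mul_eq0 (R : realDomainType) n (x : 'rV[R]_n) :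
  (x *m x^T) 0 0 = 0 -> x = 0.
Proof.
have x2_ge0 j : 0 <= x 0 j * x^T j 0 by rewrite mxE -expr2 sqr_ge0.
rewrite mxE => /(psumr_eq0P (fun j _ => x2_ge0 j)) x2_eq0.
apply/rowP => i; move/eqP: (x2_eq0 i isT).
by rewrite mxE -expr2 sqrf_eq0 => /eqP ->; rewrite mxE.
Qed.

Lemma sum_mxvec_index (V : nmodType) n1 n2 (F : 'I_(n1 * n2) -> V) :
  \sum_k F k = \sum_i \sum_j F (mxvec_index i j).
Proof.
by rewrite pair_bigA (reindex _ (curry_mxvec_bij n1 n2)); apply: eq_bigr => -[].
Qed.

Section OrthogonalProjection.
Variable R : realType.

Definition vdot n (u v : 'cV[R]_n) : R := \sum_i u i 0 * v i 0.

Lemma vdotBr n (u v w : 'cV[R]_n) : vdot u (v - w) = vdot u v - vdot u w.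
Proof. by rewrite /vdot -sumrB; apply: eq_bigr => i _; rewrite !mxE mulrBr. Qed.

Lemma vdot_mulmxl n r (M : 'M[R]_(n, r)) (d : 'cV_r) w :
  vdot (M *m d) w = \sum_l d l 0 * vdot (col l M) w.
Proof.
rewrite /vdot; under eq_bigr do rewrite mxE big_distrl /=.
rewrite exchange_big; apply: eq_bigr => l _; rewrite big_distrr.
by apply: eq_bigr => i _; rewrite /= !mxE mulrCA mulrA.
Qed.

Lemma sqnorm_ge0 n (u : 'cV[R]_n) : 0 <= sqnorm u.
Proof. by apply: sumr_ge0 => i _; rewrite sqr_ge0. Qed.

Lemma sqnormD_orth n (u w : 'cV[R]_n) :
  vdot u w = 0 -> sqnorm (u + w) = sqnorm u + sqnorm w.
Proof.
move=> uw0; rewrite /sqnorm.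
under eq_bigr do rewrite mxE sqrrD.
by rewrite !big_split /= -/(vdot u w) uw0 !addr0.
Qed.

(* R^n is the direct sum of col(M) and ker(M^T): a vector of both is
   orthogonal to itself. *)
Lemma is_proj_col_exists n r (M : 'M[R]_(n, r)) v : exists p, is_proj_col M v p.
Proof.
have cap0 : \rank (M^T :&: kermx M)%MS = 0%N.
  apply/eqP; rewrite mxrank_eq0 -submx0; apply/rV_subP => x.
  rewrite sub_capmx => /andP[/submxP[D ->] /sub_kermxP DMM0].
  rewrite submx0; apply/eqP/rV_self_mul_eq0.
  by rewrite trmx_mul trmxK mulmxA DMM0 mul0mx mxE.
have full : row_full (M^T + kermx M)%MS.
  rewrite /row_full; have := mxrank_sum_cap M^T (kermx M).
  by rewrite cap0 addn0 => ->; rewrite mxrank_tr mxrank_ker subnKC ?rank_leq_row.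
have /sub_addsmxP [[u w] /= vE] := submx_full v^T full.
exists (u *m M^T)^T; split; first by rewrite trmxK submxMl.
apply: trmx_inj; rewrite trmx0 trmx_mul trmxK linearB /= trmxK vE addrC addKr.
by rewrite -mulmxA mulmx_ker mulmx0.
Qed.

Lemma proj_colP n r (M : 'M[R]_(n, r)) v : is_proj_col M v (proj_col M v).
Proof. exact: epsilon_spec (is_proj_col_exists M v). Qed.

Lemma is_proj_col_vdot n r (M : 'M[R]_(n, r)) v p :
  is_proj_col M v p -> forall l, vdot (col l M) p = vdot (col l M) v.
Proof.
move=> [_ orth] l; apply/eqP; rewrite eq_sym -subr_eq0 -vdotBr.
have := congr1 (fun X : 'cV_r => X l 0) orth; rewrite !mxE => <-.
by apply/eqP/eq_bigr => i _; rewrite !mxE.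
Qed.

Lemma is_proj_col_sqnorm_min n r (M : 'M[R]_(n, r)) v p q :
  is_proj_col M v p -> (forall l, vdot (col l M) q = vdot (col l M) v) ->
  sqnorm p <= sqnorm q.
Proof.
move=> pP qv; have [/submxP[D pE] _] := pP.
have {}pE : p = M *m D^T by rewrite -[p]trmxK pE trmx_mul trmxK.
have orth : vdot p (q - p) = 0.
  rewrite pE vdot_mulmxl big1 // => l _.
  by rewrite vdotBr -pE qv (is_proj_col_vdot pP) subrr mulr0.
by rewrite -[q](addrNK p) addrC sqnormD_orth // lerDl sqnorm_ge0.
Qed.

End OrthogonalProjection.

Section KhatriRao.
Variable R : realType.

Definition kron_cV n1 n2 (x : 'cV[R]_n1) (y : 'cV[R]_n2) : 'cV[R]_(n1 * n2) :=
  (mxvec (x *m y^T))^T.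

Lemma kron_cVE n1 n2 (x : 'cV[R]_n1) (y : 'cV[R]_n2) i j :
  kron_cV x y (mxvec_index i j) 0 = x i 0 * y j 0.
Proof. by rewrite mxE mxvecE mxE big_ord1 mxE. Qed.

Lemma vdot_kron n1 n2 (x u : 'cV[R]_n1) (y w : 'cV[R]_n2) :
  vdot (kron_cV x y) (kron_cV u w) = vdot x u * vdot y w.
Proof.
rewrite /vdot sum_mxvec_index big_distrlr /=.
by do 2!apply: eq_bigr => ? _; rewrite !kron_cVE mulrACA.
Qed.

Lemma sqnorm_kron n1 n2 (x : 'cV[R]_n1) (y : 'cV[R]_n2) :
  sqnorm (kron_cV x y) = sqnorm x * sqnorm y.
Proof.
have sqnormE n (u : 'cV[R]_n) : sqnorm u = vdot u u.
  by apply: eq_bigr => i _; rewrite expr2.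
by rewrite !sqnormE vdot_kron.
Qed.

Lemma e_vec_mxvec_index n1 n2 (i : 'I_n1) (j : 'I_n2) :
  e_vec R (mxvec_index i j) = kron_cV (e_vec R i) (e_vec R j).
Proof. by rewrite /kron_cV trmx_delta mul_delta_mx mxvec_delta trmx_delta. Qed.

Lemma col_khatri_rao n1 n2 r (A : 'M[R]_(n1, r)) (B : 'M[R]_(n2, r)) l :
  col l (khatri_rao A B) = kron_cV (col l A) (col l B).
Proof.
apply/colP => k; case/mxvec_indexP: k => i j.
by rewrite kron_cVE !mxE cast_ordK enum_rankK.
Qed.

Lemma sqnorm_proj_khatri_rao n1 n2 r (A : 'M[R]_(n1, r)) (B : 'M[R]_(n2, r)) i j :
  sqnorm (proj_col (khatri_rao A B) (e_vec R (mxvec_index i j)))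
  <= sqnorm (proj_col A (e_vec R i)) * sqnorm (proj_col B (e_vec R j)).
Proof.
rewrite -sqnorm_kron; apply: is_proj_col_sqnorm_min; first exact: proj_colP.
move=> l; rewrite col_khatri_rao e_vec_mxvec_index !vdot_kron.
by rewrite !(is_proj_col_vdot (proj_colP _ _)).
Qed.

Definition max_leverage n r (M : 'M[R]_(n, r)) : R :=
  \big[Num.max/0]_(i < n) sqnorm (proj_col M (e_vec R i)).

Lemma max_leverage_ge0 n r (M : 'M[R]_(n, r)) : 0 <= max_leverage M.
Proof. exact: bigmax_ge_id. Qed.

Lemma max_leverage_khatri_rao n1 n2 r (A : 'M[R]_(n1, r)) (B : 'M[R]_(n2, r)) :
  max_leverage (khatri_rao A B) <= max_leverage A * max_leverage B.
Proof.
apply: bigmax_le => [|k _]; first by rewrite mulr_ge0 ?max_leverage_ge0.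
case/mxvec_indexP: k => i j; apply: le_trans (sqnorm_proj_khatri_rao A B i j) _.
by rewrite ler_pM ?sqnorm_ge0 //; apply: le_bigmax.
Qed.

End KhatriRao.

Theorem lemma2 (R : realType) (n1 n2 r : nat)
  (A : 'M[R]_(n1, r)) (B : 'M[R]_(n2, r)) :
  coherence (khatri_rao A B) <= coherence A * coherence B * r%:R.
Proof.
rewrite /coherence -!/(max_leverage _).
have [-> | r_neq0] := eqVneq (r%:R : R) 0; first by rewrite invr0 !mulr0 mul0r.
have -> : n1%:R / r%:R * max_leverage A * (n2%:R / r%:R * max_leverage B) * r%:R
        = (n1 * n2)%:R / r%:R * (max_leverage A * max_leverage B) :> R.
  by rewrite natrM; field.
by rewrite ler_wpM2l ?divr_ge0 ?ler0n ?max_leverage_khatri_rao.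
Qed.
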